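(* Let $\kappa\in(0,1)$, $\tau>0$, $\Omega\in\mathbb{R}\setminus\{0\}$ and $W>0$ be independent parameters, and let $\Psi(P)=1$ if $|P|<W$ and $\Psi(P)=0$ otherwise. Consider the eigenvalue problem $$\tau\lambda\,Z(P)=\tau\Omega\,Z'(P)-Z(P)+\kappa^{-1}\Psi(P)Z(P)-\kappa^{-1}\int_{-\infty}^{\infty}\Psi(Q)Z(Q)\,dQ,\qquad P\in\mathbb{R},$$ for $\lambda\in\mathbb{C}$ and $Z:\mathbb{R}\to\mathbb{C}$ continuous, growing at most linearly, and satisfying the equation on $\mathbb{R}\setminus\{-W,W\}$. Call $\lambda$ an eigenvalue if there is a nontrivial such $Z$. Then: (i) A complex number $\lambda$ with $\operatorname{Re}(\tau\lambda)<-1$ is an eigenvalue if and only if $$\exp\Big(\frac{\kappa\tau\lambda+\kappa-1}{\kappa\tau|\Omega|}\,2W\Big)-1=\frac{(\kappa\tau\lambda+\kappa)(\kappa\tau\lambda+\kappa-1)(\kappa\tau\lambda+\kappa-1+2W)}{\kappa\tau|\Omega|}.$$ (ii) For every $\lambda\in\mathbb{C}$ with $\operatorname{Re}(\tau\lambda)=-1$ there exists a corresponding eigenfunction. (iii) A complex number $\lambda$ with $\operatorname{Re}(\tau\lambda)>-1$ is an eigenvalue if and only if both $$1-\exp\Big(-\frac{\kappa\tau\lambda+\kappa-1}{\kappa\tau|\Omega|}\,2W\Big)=\frac{(\kappa\tau\lambda+\kappa)(\kappa\tau\lambda+\kappa-1)(\kappa\tau\lambda+\kappa-1+2W)}{\kappa\tau|\Omega|}$$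 and $\tau\lambda\neq(1-\kappa)/\kappa$ hold. Moreover, all eigenvalues in the cases (i) and (iii) are simple and have bounded eigenfunctions.
   Context: This eigenvalue problem is the linearization, in a comoving frame $P=p-\tfrac12(\Xi_-+\Xi_+)-\Omega t$ with $z(t,p)=e^{\lambda t}Z(P)$, of the mean-field particle dynamics $\tau\partial_t x=\sigma(t)+\delta(p-\tfrac12)-H'(x)$ (with trilinear $H'$ having spinodal region $[-\kappa,\kappa]$) around a traveling wave of speed $\Omega$ whose spinodal stripe has half width $W$. In this statement, however, $W$ is not required to satisfy any traveling-wave relation. The set in (ii) is called the continuous spectrum. *)

From Stdlib Require Import Reals.
From Coquelicot Require Export Coquelicot.
Export Rdefinitions.
Open Scope R_scope.

Definition Cexp (z : C) : C :=
  (exp (Re z) * cos (Im z), exp (Re z) * sin (Im z)).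

Definition Psi (W P : R) : R := if Rlt_dec (Rabs P) W then 1 else 0.

(* Since Psi is the indicator of (-W,W), int_R Psi Z = int_{-W}^{W} Z. *)
Definition eig_solution (kappa tau Omega W : R) (lam : C) (Z : R -> C) : Prop :=
  (forall P, continuous Z P) /\
  (exists K : R, forall P, Cmod (Z P) <= K * (1 + Rabs P)) /\
  exists I : C, is_RInt Z (- W) W I /\
  forall P, P <> W -> P <> - W ->
    exists dZ : C, is_derive Z P dZ /\
      (RtoC tau * lam * Z P =
       RtoC (tau * Omega) * dZ - Z P + RtoC (/ kappa * Psi W P) * Z P
       - RtoC (/ kappa) * I)%C.

Definition eigenfunction kappa tau Omega W lam (Z : R -> C) : Prop :=
  eig_solution kappa tau Omega W lam Z /\ exists P, Z P <> RtoC 0.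

Definition is_eigenvalue kappa tau Omega W (lam : C) : Prop :=
  exists Z, eigenfunction kappa tau Omega W lam Z.

(* simple: the solution space is one-dimensional (geometric simplicity) *)
Definition simple_eigenvalue kappa tau Omega W (lam : C) : Prop :=
  exists Z0, eigenfunction kappa tau Omega W lam Z0 /\
   forall Z, eig_solution kappa tau Omega W lam Z ->
     exists c : C, forall P, Z P = (c * Z0 P)%C.

Definition bounded_fun (Z : R -> C) : Prop :=
  exists M : R, forall P, Cmod (Z P) <= M.

Definition char_rhs kappa tau Omega W (lam : C) : C :=
  ((RtoC kappa * RtoC tau * lam + RtoC kappa)
   * (RtoC kappa * RtoC tau * lam + RtoC kappa - RtoC 1)
   * (RtoC kappa * RtoC tau * lam + RtoC kappa - RtoC 1 + RtoC (2 * W))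
   / RtoC (kappa * tau * Rabs Omega))%C.

Definition char_arg kappa tau Omega W (lam : C) : C :=
  ((RtoC kappa * RtoC tau * lam + RtoC kappa - RtoC 1)
   / RtoC (kappa * tau * Rabs Omega) * RtoC (2 * W))%C.

(* Writing m = kappa tau lam + kappa - 1 and om = kappa tau Omega, an eigenfunction solves
   om Z' = (m + 1 - Psi) Z + I, with I the integral of Z over the stripe: a linear ODE with
   constant coefficients on each of the three intervals. When Re (tau lam) <> -1, the outer
   mode exp ((m + 1) P / om) grows exponentially beyond exactly one end e of the stripe, so
   linear growth forces Z e = - I / (m + 1). This determines Z = I Phi for an explicit bounded
   Phi, which gives simplicity and boundedness, and the consistency condition I = int Z
   becomes I D = 0 for an explicit D: D = 0 is the characteristic equation, in one of its two
   forms according to the sign of e Omega. For m = 0 only Z = 0 survives, which excludes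
   tau lam = (1 - kappa) / kappa. When Re (tau lam) = -1 the outer modes are bounded or affine,
   no condition arises at the ends, and a nontrivial solution exists for every lam. *)

From Stdlib Require Import Reals Lra Psatz Classical.
From Coquelicot Require Import Coquelicot.
Open Scope R_scope.

(** * Complex-valued functions of a real variable *)

Lemma RtoC_neq0 (x : R) : x <> 0 -> RtoC x <> RtoC 0.
Proof. intros Hx E. apply Hx. exact (f_equal fst E). Qed.

Lemma Cminus_eq0 (x y : C) : (x - y)%C = RtoC 0 -> x = y.
Proof. intros H. transitivity (x - y + y)%C; [ring|]. rewrite H. ring. Qed.

Lemma Cmult_eq0_l (x y : C) : y <> RtoC 0 -> (x * y)%C = RtoC 0 -> x = RtoC 0.
Proof.
  intros Hy H. transitivity (x * y / y)%C; [field; exact Hy|]. rewrite H. field; exact Hy.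
Qed.

Lemma scaled_diff_eq0_iff (c D L R : C) : c <> RtoC 0 -> D = (c * (R - L))%C ->
  D = RtoC 0 <-> L = R.
Proof.
  intros Hc ->. split; intros H.
  - symmetry. apply Cminus_eq0, (Cmult_eq0_l _ c); [exact Hc|]. rewrite Cmult_comm. exact H.
  - rewrite H. ring.
Qed.

Lemma Cdiv_neq0 (x y : C) : x <> RtoC 0 -> y <> RtoC 0 -> (x / y)%C <> RtoC 0.
Proof.
  intros Hx Hy E. apply Hx. transitivity (x / y * y)%C; [field; exact Hy|]. rewrite E. ring.
Qed.

Lemma Re_RtoC_mult (z : C) (r : R) : Re (z * RtoC r) = Re z * r.
Proof. destruct z; unfold Re; simpl; ring. Qed.

Lemma Re_RtoC_mult_l (r : R) (z : C) : Re (RtoC r * z) = r * Re z.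
Proof. destruct z; unfold Re; simpl; ring. Qed.

Lemma Re_RtoC_div (z : C) (r : R) : r <> 0 -> Re (z / RtoC r) = Re z / r.
Proof. intros Hr. unfold Cdiv. rewrite <- RtoC_inv by exact Hr. apply Re_RtoC_mult. Qed.

Lemma Re_plus_1 (z : C) : Re (z + RtoC 1) = Re z + 1.
Proof. destruct z; reflexivity. Qed.

Lemma Cmod_sub_le (Y X : C) : Cmod X - Cmod Y <= Cmod (Y + X).
Proof.
  pose proof (Cmod_triangle (Y + X) (- Y)) as H.
  rewrite Cmod_opp in H. replace (Y + X + - Y)%C with X in H by ring. lra.
Qed.

Lemma is_RInt_C_unique (f : R -> C) a b (I J : C) :
  is_RInt f a b I -> is_RInt f a b J -> I = J.
Proof.
  intros HI HJ.
  rewrite <- (is_RInt_unique (V := C_R_CompleteNormedModule) f a b I HI).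
  exact (is_RInt_unique (V := C_R_CompleteNormedModule) f a b J HJ).
Qed.

Lemma Cexp_0 : Cexp (RtoC 0) = RtoC 1.
Proof. unfold Cexp, Re, Im, RtoC; simpl. rewrite exp_0, cos_0, sin_0. f_equal; ring. Qed.

Lemma Cmod_Cexp (z : C) : Cmod (Cexp z) = exp (Re z).
Proof.
  unfold Cmod, Cexp; cbn [fst snd].
  replace ((exp (Re z) * cos (Im z)) ^ 2 + (exp (Re z) * sin (Im z)) ^ 2)
    with (exp (Re z) ^ 2 * (Rsqr (sin (Im z)) + Rsqr (cos (Im z)))) by (unfold Rsqr; ring).
  rewrite sin2_cos2, Rmult_1_r. apply sqrt_pow2. left; apply exp_pos.
Qed.

Lemma Cexp_neq0 (z : C) : Cexp z <> RtoC 0.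
Proof.
  intros E. pose proof (exp_pos (Re z)) as H.
  rewrite <- Cmod_Cexp, E, Cmod_0 in H. lra.
Qed.

Lemma is_derive_Re (f : R -> C) x l :
  is_derive f x l -> is_derive (fun t => Re (f t)) x (Re l).
Proof.
  intros H. unfold is_derive in *. eapply filterdiff_ext_lin.
  - apply (filterdiff_comp f (fun c : C_R_NormedModule => fst c) _
      (fun c : C_R_NormedModule => fst c) H).
    apply filterdiff_linear, (is_linear_fst (K := R_AbsRing) (U := R_NormedModule)).
  - reflexivity.
Qed.

Lemma is_derive_Im (f : R -> C) x l :
  is_derive f x l -> is_derive (fun t => Im (f t)) x (Im l).
Proof.
  intros H. unfold is_derive in *. eapply filterdiff_ext_lin.
  - apply (filterdiff_comp f (fun c : C_R_NormedModule => snd c) _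
      (fun c : C_R_NormedModule => snd c) H).
    apply filterdiff_linear, (is_linear_snd (K := R_AbsRing) (U := R_NormedModule)).
  - reflexivity.
Qed.

Lemma is_derive_C_of_parts (f : R -> C) x l :
  is_derive (fun t => Re (f t)) x (Re l) ->
  is_derive (fun t => Im (f t)) x (Im l) -> is_derive f x l.
Proof.
  intros H1 H2.
  apply (is_derive_ext (fun t => (Re (f t), Im (f t)) : C)).
  { intros t. destruct (f t); reflexivity. }
  destruct l as [l1 l2]. unfold is_derive in *. eapply filterdiff_ext_lin.
  - apply (filterdiff_comp'_2 (K := R_AbsRing) (W := C_R_NormedModule) _ _
      (fun a b => (a, b)) x _ _ (fun a b => (a, b)) H1 H2).
    apply filterdiff_linear.
    apply (is_linear_prod (K := R_AbsRing)
      (T := prod_NormedModule R_AbsRing R_NormedModule R_NormedModule)).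
    + apply is_linear_fst.
    + apply is_linear_snd.
  - reflexivity.
Qed.

Lemma is_derive_C_eq (f : R -> C) x (l l' : C) :
  is_derive f x l -> l = l' -> is_derive f x l'.
Proof. intros H <-; exact H. Qed.

Lemma is_derive_Cminus (f g : R -> C) x df dg :
  is_derive f x df -> is_derive g x dg -> is_derive (fun t => (f t - g t)%C) x (df - dg)%C.
Proof. exact (is_derive_minus f g x df dg). Qed.

Lemma is_derive_Cmult (f g : R -> C) x df dg :
  is_derive f x df -> is_derive g x dg ->
  is_derive (fun t => (f t * g t)%C) x (df * g x + f x * dg)%C.
Proof.
  intros Hf Hg.
  pose proof (is_derive_Re _ _ _ Hf) as Hf1. pose proof (is_derive_Im _ _ _ Hf) as Hf2.
  pose proof (is_derive_Re _ _ _ Hg) as Hg1. pose proof (is_derive_Im _ _ _ Hg) as Hg2.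
  apply is_derive_C_of_parts.
  - replace (Re (df * g x + f x * dg)%C)
      with (Re df * Re (g x) + Re (f x) * Re dg - (Im df * Im (g x) + Im (f x) * Im dg))
      by (unfold Re, Im; simpl; ring).
    exact (is_derive_minus _ _ _ _ _ (is_derive_mult _ _ _ _ _ Hf1 Hg1 Rmult_comm)
             (is_derive_mult _ _ _ _ _ Hf2 Hg2 Rmult_comm)).
  - replace (Im (df * g x + f x * dg)%C)
      with (Re df * Im (g x) + Re (f x) * Im dg + (Im df * Re (g x) + Im (f x) * Re dg))
      by (unfold Re, Im; simpl; ring).
    exact (is_derive_plus _ _ _ _ _ (is_derive_mult _ _ _ _ _ Hf1 Hg2 Rmult_comm)
             (is_derive_mult _ _ _ _ _ Hf2 Hg1 Rmult_comm)).
Qed.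

Lemma is_derive_continuous_C (f : R -> C) x l : is_derive f x l -> continuous f x.
Proof.
  intros H. exact (ex_derive_continuous (K := R_AbsRing) (V := C_R_NormedModule) f x
                     (ex_intro _ l H)).
Qed.

(* Componentwise [continuity_pt], the form consumed by [MVT_gen]. *)
Definition continuous_parts (f : R -> C) (x : R) : Prop :=
  continuity_pt (fun t => Re (f t)) x /\ continuity_pt (fun t => Im (f t)) x.

Lemma continuous_parts_of_continuous (f : R -> C) x :
  continuous f x -> continuous_parts f x.
Proof.
  intros H. split; apply continuity_pt_filterlim.
  - apply (continuous_comp f (fun c : C => fst c)); [exact H|]. apply continuous_fst.
  - apply (continuous_comp f (fun c : C => snd c)); [exact H|]. apply continuous_snd.
Qed.

Lemma continuous_parts_Cmult (f g : R -> C) x :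
  continuous_parts f x -> continuous_parts g x -> continuous_parts (fun t => (f t * g t)%C) x.
Proof.
  intros [F1 F2] [G1 G2]. split; simpl.
  - apply continuity_pt_minus; apply continuity_pt_mult; assumption.
  - apply continuity_pt_plus; apply continuity_pt_mult; assumption.
Qed.

Lemma continuous_parts_Cminus (f g : R -> C) x :
  continuous_parts f x -> continuous_parts g x -> continuous_parts (fun t => (f t - g t)%C) x.
Proof.
  intros [F1 F2] [G1 G2]. split; simpl; apply continuity_pt_plus; try assumption;
    apply continuity_pt_opp; assumption.
Qed.

Lemma eq_of_is_derive_0 (g : R -> C) a b :
  (forall x, Rmin a b < x < Rmax a b -> is_derive g x (RtoC 0)) ->
  (forall x, Rmin a b <= x <= Rmax a b -> continuous_parts g x) -> g a = g b.
Proof.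
  intros Hd Hc.
  destruct (MVT_gen (fun t => Re (g t)) a b (fun _ => 0)) as [c1 [_ E1]].
  { intros x Hx. exact (is_derive_Re g x _ (Hd x Hx)). }
  { intros x Hx. apply Hc, Hx. }
  destruct (MVT_gen (fun t => Im (g t)) a b (fun _ => 0)) as [c2 [_ E2]].
  { intros x Hx. exact (is_derive_Im g x _ (Hd x Hx)). }
  { intros x Hx. apply Hc, Hx. }
  destruct (g a), (g b). unfold Re, Im in *; simpl in *.
  f_equal; lra.
Qed.

(** * Linear ODEs with constant coefficients *)

Lemma is_derive_Cexp_affine (c : C) (p x : R) :
  is_derive (fun t => Cexp (c * RtoC (t - p))) x (c * Cexp (c * RtoC (x - p)))%C.
Proof.
  destruct c as [c1 c2].
  apply is_derive_C_of_parts; unfold Cexp; simpl; unfold Rminus; auto_derive; auto; ring.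
Qed.

(* The weight [Cexp (- c (t - a))] turns [h' = c h] into [(weight * h)' = 0]. *)
Lemma linear_ode_unique (Z1 Z2 : R -> C) (c k : C) a b :
  (forall x, Rmin a b < x < Rmax a b -> is_derive Z1 x (c * Z1 x + k)%C) ->
  (forall x, Rmin a b < x < Rmax a b -> is_derive Z2 x (c * Z2 x + k)%C) ->
  (forall x, Rmin a b <= x <= Rmax a b -> continuous Z1 x) ->
  (forall x, Rmin a b <= x <= Rmax a b -> continuous Z2 x) ->
  Z1 a = Z2 a -> Z1 b = Z2 b.
Proof.
  intros D1 D2 C1 C2 Ha.
  set (weight t := Cexp (- c * RtoC (t - a))).
  assert (Hconst : (weight a * (Z1 a - Z2 a))%C = (weight b * (Z1 b - Z2 b))%C).
  { apply (eq_of_is_derive_0 (fun t => weight t * (Z1 t - Z2 t))%C).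
    - intros x Hx. eapply is_derive_C_eq.
      + apply is_derive_Cmult; [apply is_derive_Cexp_affine|].
        apply is_derive_Cminus; [apply D1 | apply D2]; exact Hx.
      + unfold weight. ring.
    - intros x Hx. apply continuous_parts_Cmult.
      + apply continuous_parts_of_continuous.
        exact (is_derive_continuous_C _ _ _ (is_derive_Cexp_affine _ _ _)).
      + apply continuous_parts_Cminus; apply continuous_parts_of_continuous;
          [apply C1 | apply C2]; exact Hx. }
  rewrite Ha in Hconst. replace (Z2 a - Z2 a)%C with (RtoC 0) in Hconst by ring.
  apply Cminus_eq0, (Cmult_eq0_l _ (weight b)); [apply Cexp_neq0|].
  rewrite Cmult_comm, <- Hconst. ring.
Qed.

Definition exp_relax (c Y : C) (p : R) (z0 : C) (P : R) : C :=
  (Y + Cexp (c * RtoC (P - p)) * (z0 - Y))%C.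

Lemma exp_relax_start c Y p z0 : exp_relax c Y p z0 p = z0.
Proof.
  unfold exp_relax. rewrite Rminus_diag. replace (c * RtoC 0)%C with (RtoC 0) by ring.
  rewrite Cexp_0. ring.
Qed.

Lemma exp_relax_rest c Y p P : exp_relax c Y p Y P = Y.
Proof. unfold exp_relax. ring. Qed.

Lemma is_derive_exp_relax c Y p z0 x :
  is_derive (exp_relax c Y p z0) x (c * (exp_relax c Y p z0 x - Y))%C.
Proof.
  destruct c as [c1 c2], Y as [y1 y2], z0 as [u1 u2].
  apply is_derive_C_of_parts; unfold exp_relax, Cexp; simpl; unfold Rminus;
    auto_derive; auto; ring.
Qed.

Lemma exp_relax_unique (Z : R -> C) c Y a b :
  (forall x, Rmin a b < x < Rmax a b -> is_derive Z x (c * (Z x - Y))%C) ->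
  (forall x, Rmin a b <= x <= Rmax a b -> continuous Z x) ->
  Z b = exp_relax c Y a (Z a) b.
Proof.
  intros Hd Hc. apply (linear_ode_unique _ _ c (- c * Y)%C a b).
  - intros x Hx. eapply is_derive_C_eq; [apply Hd, Hx | ring].
  - intros x _. eapply is_derive_C_eq; [apply is_derive_exp_relax | ring].
  - exact Hc.
  - intros x _. apply (is_derive_continuous_C _ _ _ (is_derive_exp_relax _ _ _ _ _)).
  - symmetry. apply exp_relax_start.
Qed.

Lemma is_derive_affine (z0 k : C) (p x : R) :
  is_derive (fun t => (z0 + k * RtoC (t - p))%C) x k.
Proof.
  destruct z0, k. apply is_derive_C_of_parts; simpl; auto_derive; auto; ring.
Qed.

Lemma affine_unique (Z : R -> C) (k : C) a b :
  (forall x, Rmin a b < x < Rmax a b -> is_derive Z x k) ->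
  (forall x, Rmin a b <= x <= Rmax a b -> continuous Z x) ->
  Z b = (Z a + k * RtoC (b - a))%C.
Proof.
  intros Hd Hc. apply (linear_ode_unique _ (fun t => Z a + k * RtoC (t - a))%C (RtoC 0) k a b).
  - intros x Hx. eapply is_derive_C_eq; [apply Hd, Hx | ring].
  - intros x _. eapply is_derive_C_eq; [apply is_derive_affine | ring].
  - exact Hc.
  - intros x _. apply (is_derive_continuous_C _ _ _ (is_derive_affine _ _ _ _)).
  - rewrite Rminus_diag. ring.
Qed.

Lemma is_RInt_exp_relax c Y p z0 a b : c <> RtoC 0 ->
  is_RInt (exp_relax c Y p z0) a b
    (Y * RtoC (b - a) + (z0 - Y) / c * (Cexp (c * RtoC (b - p)) - Cexp (c * RtoC (a - p))))%C.
Proof.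
  intros Hc.
  set (F t := (Y * RtoC t + (z0 - Y) / c * Cexp (c * RtoC (t - p)))%C).
  replace (Y * RtoC (b - a) + _)%C with (F b - F a)%C.
  2:{ unfold F. rewrite (RtoC_minus b a). ring. }
  apply (is_RInt_derive (V := C_R_CompleteNormedModule) F).
  - intros x _. assert (Hn : Re c * Re c + Im c * Im c <> 0).
    { intros E. apply Hc. destruct c as [c1 c2]. unfold Re, Im in E; simpl in E.
      assert (c1 = 0) by nra. assert (c2 = 0) by nra. subst. reflexivity. }
    destruct c as [c1 c2], Y as [y1 y2], z0 as [u1 u2]. unfold Re, Im in Hn; simpl in Hn.
    apply is_derive_C_of_parts; unfold F, exp_relax, Cexp, Cdiv, Cinv; simpl; unfold Rminus;
      auto_derive; auto; field; exact Hn.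
  - intros x _. apply (is_derive_continuous_C _ _ _ (is_derive_exp_relax _ _ _ _ _)).
Qed.

Lemma is_RInt_affine (z0 k : C) (p a b : R) :
  is_RInt (fun t => (z0 + k * RtoC (t - p))%C) a b
    (z0 * RtoC (b - a) + k * RtoC (((b - p) ^ 2 - (a - p) ^ 2) / 2))%C.
Proof.
  set (F t := (z0 * RtoC t + k * RtoC ((t - p) ^ 2 / 2))%C).
  replace (z0 * RtoC (b - a) + _)%C with (F b - F a)%C.
  2:{ unfold F. replace (((b - p) ^ 2 - (a - p) ^ 2) / 2) with ((b - p) ^ 2 / 2 - (a - p) ^ 2 / 2)
        by field.
      rewrite (RtoC_minus b a), RtoC_minus. ring. }
  apply (is_RInt_derive (V := C_R_CompleteNormedModule) F).
  - intros x _. destruct z0, k.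
    apply is_derive_C_of_parts; unfold F; simpl; auto_derive; auto; field.
  - intros x _. apply (is_derive_continuous_C _ _ _ (is_derive_affine _ _ _ _)).
Qed.

(** * Growth estimates *)

(* [exp (r t) > (r t / 2)^2], and [t] is chosen so that [d (r t / 2)^2] beats [A + K t]. *)
Lemma exp_dominates_affine (r d A K : R) : 0 < r -> 0 < d ->
  exists t, 0 <= t /\ A + K * t < exp (r * t) * d.
Proof.
  intros Hr Hd.
  set (B := Rabs A + Rabs K).
  assert (HB : 0 <= B) by (unfold B; pose proof (Rabs_pos A); pose proof (Rabs_pos K); lra).
  assert (Hdr : 0 < d * (r * r)) by (apply Rmult_lt_0_compat; nra).
  set (t := 1 + 4 * B / (d * (r * r))).
  assert (Ht : 1 <= t).
  { unfold t. assert (0 <= 4 * B / (d * (r * r))) by (apply Rdiv_le_0_compat; lra). lra. }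
  exists t. split; [lra|].
  assert (Hexp : (r * t / 2) * (r * t / 2) < exp (r * t)).
  { replace (exp (r * t)) with (exp (r * t / 2) * exp (r * t / 2))
      by (rewrite <- exp_plus; f_equal; lra).
    assert (0 < r * t / 2) by nra.
    assert (1 + r * t / 2 < exp (r * t / 2)) by (apply exp_ineq1; lra). nra. }
  assert (Hquad : B * t < d * (r * t / 2) * (r * t / 2)).
  { replace (d * (r * t / 2) * (r * t / 2)) with (d * (r * r) * t * t / 4) by field.
    replace (d * (r * r) * t) with (d * (r * r) + 4 * B) by (unfold t; field; lra). nra. }
  assert (A + K * t <= B * t).
  { unfold B. pose proof (Rle_abs A). pose proof (Rle_abs K).
    pose proof (Rabs_pos A). pose proof (Rabs_pos K). nra. }
  nra.
Qed.

Lemma exp_mode_vanishes (Y D c : C) (A B : R) : 0 < Re c ->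
  (forall t, 0 <= t -> Cmod (Y + Cexp (c * RtoC t) * D) <= A + B * t) -> D = RtoC 0.
Proof.
  intros Hc Hbound.
  destruct (Req_dec (Cmod D) 0) as [H0|H0]; [apply Cmod_eq_0, H0|exfalso].
  assert (Hd : 0 < Cmod D) by (pose proof (Cmod_ge_0 D); lra).
  destruct (exp_dominates_affine (Re c) (Cmod D) (A + Cmod Y) B Hc Hd) as [t [Ht Hlt]].
  pose proof (Hbound t Ht) as Hle.
  pose proof (Cmod_sub_le Y (Cexp (c * RtoC t) * D)) as Hrev.
  rewrite Cmod_mult, Cmod_Cexp, Re_RtoC_mult in Hrev. lra.
Qed.

Lemma Cmod_exp_relax_le c Y p z0 P r : Re c * (P - p) <= r ->
  Cmod (exp_relax c Y p z0 P) <= Cmod Y + exp r * Cmod (z0 - Y).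
Proof.
  intros Hr. unfold exp_relax.
  eapply Rle_trans; [apply Cmod_triangle|].
  rewrite Cmod_mult, Cmod_Cexp, Re_RtoC_mult.
  apply Rplus_le_compat_l, Rmult_le_compat_r; [apply Cmod_ge_0|].
  destruct (Req_dec (Re c * (P - p)) r) as [->|Hne]; [lra|].
  left. apply exp_increasing. lra.
Qed.

Lemma Cmod_affine_le (z0 k : C) (p P : R) :
  Cmod (z0 + k * RtoC (P - p)) <= (Cmod z0 + Cmod k * (1 + Rabs p)) * (1 + Rabs P).
Proof.
  eapply Rle_trans; [apply Cmod_triangle|]. rewrite Cmod_mult, Cmod_R.
  assert (Htri : Cmod k * Rabs (P - p) <= Cmod k * (Rabs P + Rabs p)).
  { apply Rmult_le_compat_l; [apply Cmod_ge_0|].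
    unfold Rminus. rewrite <- (Rabs_Ropp p). apply Rabs_triang. }
  pose proof (Cmod_ge_0 z0). pose proof (Cmod_ge_0 k).
  pose proof (Rabs_pos P). pose proof (Rabs_pos p).
  assert (0 <= Cmod k * Rabs p * Rabs P) by (apply Rmult_le_pos; [apply Rmult_le_pos|]; lra).
  nra.
Qed.

Lemma linear_growth_of_bounded (F : R -> C) :
  (exists M, forall P, Cmod (F P) <= M) -> exists K, forall P, Cmod (F P) <= K * (1 + Rabs P).
Proof.
  intros [M HM]. exists (Rabs M). intros P.
  pose proof (Rle_abs M). pose proof (Rabs_pos M). pose proof (Rabs_pos P).
  specialize (HM P). nra.
Qed.

Lemma Psi_inside W P : - W < P < W -> Psi W P = 1.
Proof.
  intros H. unfold Psi. destruct (Rlt_dec (Rabs P) W) as [_|Hn]; [reflexivity|].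
  exfalso. apply Hn, Rabs_def1; lra.
Qed.

Lemma Psi_outside W P : P < - W \/ W < P -> Psi W P = 0.
Proof.
  intros H. unfold Psi. destruct (Rlt_dec (Rabs P) W) as [Hlt|_]; [|reflexivity].
  exfalso. unfold Rabs in Hlt. destruct (Rcase_abs P); lra.
Qed.

(** * Gluing three pieces *)

Lemma locally_interval a b x : a < x < b -> locally x (fun y => a < y < b).
Proof. intros H. exact (open_and _ _ (open_gt a) (open_lt b) x H). Qed.

Lemma continuous_piecewise (f g1 g2 : R -> C) p r q : r < p < q ->
  continuous g1 p -> continuous g2 p ->
  (forall x, r < x <= p -> f x = g1 x) -> (forall x, p <= x < q -> f x = g2 x) ->
  continuous f p.
Proof.
  intros Hp H1 H2 F1 F2.
  assert (E1 : g1 p = f p) by (symmetry; apply F1; lra).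
  assert (E2 : g2 p = f p) by (symmetry; apply F2; lra).
  unfold continuous. apply filterlim_locally. intros eps.
  generalize (filter_and _ _ (proj1 (filterlim_locally g1 (g1 p)) H1 eps)
               (filter_and _ _ (proj1 (filterlim_locally g2 (g2 p)) H2 eps)
                  (locally_interval r q p Hp))).
  apply filter_imp. intros x [B1 [B2 Hx]].
  destruct (Rle_dec x p).
  - rewrite <- E1, F1 by lra. exact B1.
  - rewrite <- E2, F2 by lra. exact B2.
Qed.

Definition glue (W : R) (Fl Fin Fr : R -> C) (P : R) : C :=
  if Rlt_dec P (- W) then Fl P else if Rle_dec P W then Fin P else Fr P.

Section Glue.

Variables (W : R) (Fl Fin Fr : R -> C).
Hypothesis W_pos : 0 < W.

Lemma glue_left P : P < - W -> glue W Fl Fin Fr P = Fl P.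
Proof. intros H. unfold glue. destruct (Rlt_dec P (- W)); [reflexivity | lra]. Qed.

Lemma glue_inside P : - W <= P <= W -> glue W Fl Fin Fr P = Fin P.
Proof.
  intros H. unfold glue. destruct (Rlt_dec P (- W)); [lra|].
  destruct (Rle_dec P W); [reflexivity | lra].
Qed.

Lemma glue_right P : W < P -> glue W Fl Fin Fr P = Fr P.
Proof.
  intros H. unfold glue. destruct (Rlt_dec P (- W)); [lra|].
  destruct (Rle_dec P W); [lra | reflexivity].
Qed.

Lemma glue_locally P :
  (P < - W -> locally P (fun y => Fl y = glue W Fl Fin Fr y)) /\
  (- W < P < W -> locally P (fun y => Fin y = glue W Fl Fin Fr y)) /\
  (W < P -> locally P (fun y => Fr y = glue W Fl Fin Fr y)).
Proof.
  repeat split; intros H.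
  - generalize (locally_interval (P - 1) (- W) P ltac:(lra)); apply filter_imp.
    intros y Hy. symmetry. apply glue_left. lra.
  - generalize (locally_interval (- W) W P H); apply filter_imp.
    intros y Hy. symmetry. apply glue_inside. lra.
  - generalize (locally_interval W (P + 1) P ltac:(lra)); apply filter_imp.
    intros y Hy. symmetry. apply glue_right. lra.
Qed.

Lemma continuous_glue :
  (forall P, continuous Fl P) -> (forall P, continuous Fin P) -> (forall P, continuous Fr P) ->
  Fl (- W) = Fin (- W) -> Fr W = Fin W -> forall P, continuous (glue W Fl Fin Fr) P.
Proof.
  intros Cl Cin Cr El Er P. destruct (glue_locally P) as [Ll [Lin Lr]].
  destruct (Rtotal_order P (- W)) as [H1|[->|H1]];
    [| | destruct (Rtotal_order P W) as [H2|[->|H2]]].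
  - exact (continuous_ext_loc _ _ _ (Ll H1) (Cl P)).
  - apply (continuous_piecewise _ Fl Fin (- W) (- W - 1) W); auto; [lra| |].
    + intros x Hx. destruct (Rle_lt_or_eq_dec _ _ (proj2 Hx)) as [Hlt| ->].
      * apply glue_left, Hlt.
      * rewrite glue_inside by lra. symmetry. exact El.
    + intros x Hx. apply glue_inside. lra.
  - exact (continuous_ext_loc _ _ _ (Lin (conj H1 H2)) (Cin P)).
  - apply (continuous_piecewise _ Fin Fr W (- W) (W + 1)); auto; [lra| |].
    + intros x Hx. apply glue_inside. lra.
    + intros x Hx. destruct (Rle_lt_or_eq_dec _ _ (proj1 Hx)) as [Hlt| <-].
      * apply glue_right, Hlt.
      * rewrite glue_inside by lra. symmetry. exact Er.
  - exact (continuous_ext_loc _ _ _ (Lr H2) (Cr P)).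
Qed.

Lemma glue_linear_growth :
  (exists K, forall P, P <= - W -> Cmod (Fl P) <= K * (1 + Rabs P)) ->
  (exists K, forall P, - W <= P <= W -> Cmod (Fin P) <= K) ->
  (exists K, forall P, W <= P -> Cmod (Fr P) <= K * (1 + Rabs P)) ->
  exists K, forall P, Cmod (glue W Fl Fin Fr P) <= K * (1 + Rabs P).
Proof.
  intros [K1 H1] [K2 H2] [K3 H3].
  exists (Rabs K1 + Rabs K2 + Rabs K3). intros P.
  pose proof (Rabs_pos P). pose proof (Rabs_pos K1). pose proof (Rabs_pos K2).
  pose proof (Rabs_pos K3). pose proof (Rle_abs K1). pose proof (Rle_abs K2).
  pose proof (Rle_abs K3).
  unfold glue. destruct (Rlt_dec P (- W)); [|destruct (Rle_dec P W)].
  - specialize (H1 P ltac:(lra)). nra.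
  - specialize (H2 P ltac:(lra)). nra.
  - specialize (H3 P ltac:(lra)). nra.
Qed.

End Glue.

(** * The reduced problem *)

(* With [m = kappa tau lam + kappa - 1] and [om = kappa tau Omega], the eigenvalue equation
   multiplied by [kappa] reads [om Z' = (m + 1 - Psi) Z + I] with [I] the integral of [Z]
   over the stripe. *)
Definition reduced_solution (m : C) (om W : R) (Z : R -> C) (I : C) : Prop :=
  (forall P, continuous Z P) /\
  (exists K : R, forall P, Cmod (Z P) <= K * (1 + Rabs P)) /\
  is_RInt Z (- W) W I /\
  forall P, P <> W -> P <> - W ->
    is_derive Z P (((m + RtoC 1 - RtoC (Psi W P)) * Z P + I) / RtoC om)%C.

(* The solution with [I = 1]: inside, the mode that equals the outer equilibrium
   [-1 / (m + 1)] at [e]; outside, its continuation by the outer equation. *)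
Definition Phi_in (m : C) (om e : R) : R -> C :=
  exp_relax (m / RtoC om) (- / m) e (- / (m + RtoC 1)).

Definition Phi (m : C) (om W e : R) : R -> C :=
  glue W (exp_relax ((m + RtoC 1) / RtoC om) (- / (m + RtoC 1)) (- W) (Phi_in m om e (- W)))
    (Phi_in m om e)
    (exp_relax ((m + RtoC 1) / RtoC om) (- / (m + RtoC 1)) W (Phi_in m om e W)).

(* [m^2 (m + 1) (1 - int Phi_in)]: the consistency condition [I = int Z] for [Z = I Phi]
   reads [I Dchar = 0]. *)
Definition Dchar (m : C) (om W e : R) : C :=
  (m * m * (m + RtoC 1) + RtoC (2 * W) * m * (m + RtoC 1)
   - RtoC om * (Cexp (m / RtoC om * RtoC (W - e)) - Cexp (m / RtoC om * RtoC (- W - e))))%C.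

Section ReducedProblem.

Variables (m : C) (om W : R).
Hypotheses (W_pos : 0 < W) (om_neq0 : om <> 0).

Let om_neq0_C : RtoC om <> RtoC 0 := RtoC_neq0 om om_neq0.

Lemma reduced_nontrivial Z I :
  reduced_solution m om W Z I -> I <> RtoC 0 -> exists P, Z P <> RtoC 0.
Proof.
  intros [_ [_ [HI _]]] HI0. apply NNPP. intros Hall. apply HI0.
  assert (Hzero : is_RInt (fun _ => RtoC 0) (- W) W I).
  { apply (is_RInt_ext Z); [|exact HI].
    intros P _. apply NNPP. intros HP. apply Hall. exists P. exact HP. }
  rewrite (is_RInt_C_unique _ _ _ _ _ Hzero
             (is_RInt_const (V := C_R_NormedModule) (- W) W (RtoC 0))).
  exact (scal_zero_r (V := C_R_NormedModule) _).
Qed.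

Lemma reduced_inside_derive Z I P : reduced_solution m om W Z I -> - W < P < W ->
  is_derive Z P ((m * Z P + I) / RtoC om)%C.
Proof.
  intros [_ [_ [_ Hd]]] HP. eapply is_derive_C_eq; [apply Hd; lra|].
  rewrite Psi_inside by lra. field. exact om_neq0_C.
Qed.

Lemma reduced_outside_derive Z I P : reduced_solution m om W Z I -> P < - W \/ W < P ->
  is_derive Z P (((m + RtoC 1) * Z P + I) / RtoC om)%C.
Proof.
  intros [_ [_ [_ Hd]]] HP. eapply is_derive_C_eq; [apply Hd; lra|].
  rewrite Psi_outside by lra. field. exact om_neq0_C.
Qed.

Lemma reduced_inside Z I : reduced_solution m om W Z I -> m <> RtoC 0 ->
  forall a b, - W <= a <= W -> - W <= b <= W ->
  Z b = exp_relax (m / RtoC om) (- I / m) a (Z a) b.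
Proof.
  intros Hs Hm a b Ha Hb. apply exp_relax_unique.
  - intros x Hx. assert (Hx' : - W < x < W).
    { revert Hx. unfold Rmin, Rmax. destruct (Rle_dec a b); lra. }
    eapply is_derive_C_eq; [apply (reduced_inside_derive _ _ _ Hs Hx')|].
    field. split; assumption.
  - intros x _. apply Hs.
Qed.

Lemma reduced_inside_m0 Z I : reduced_solution m om W Z I -> m = RtoC 0 ->
  forall a b, - W <= a <= W -> - W <= b <= W ->
  Z b = (Z a + I / RtoC om * RtoC (b - a))%C.
Proof.
  intros Hs Hm a b Ha Hb. apply affine_unique.
  - intros x Hx. assert (Hx' : - W < x < W).
    { revert Hx. unfold Rmin, Rmax. destruct (Rle_dec a b); lra. }
    eapply is_derive_C_eq; [apply (reduced_inside_derive _ _ _ Hs Hx')|].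
    rewrite Hm. field. assumption.
  - intros x _. apply Hs.
Qed.

Lemma reduced_outside Z I : reduced_solution m om W Z I -> (m + RtoC 1)%C <> RtoC 0 ->
  forall a b, (W <= a /\ W <= b) \/ (a <= - W /\ b <= - W) ->
  Z b = exp_relax ((m + RtoC 1) / RtoC om) (- I / (m + RtoC 1)) a (Z a) b.
Proof.
  intros Hs Hm1 a b Hab. apply exp_relax_unique.
  - intros x Hx. assert (Hx' : x < - W \/ W < x).
    { revert Hx. unfold Rmin, Rmax. destruct (Rle_dec a b); lra. }
    eapply is_derive_C_eq; [apply (reduced_outside_derive _ _ _ Hs Hx')|].
    field. split; assumption.
  - intros x _. apply Hs.
Qed.

Lemma glue_reduced_solution (Fl Fin Fr : R -> C) (I : C) :
  (forall P, is_derive Fin P ((m * Fin P + I) / RtoC om)%C) ->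
  (forall P, is_derive Fl P (((m + RtoC 1) * Fl P + I) / RtoC om)%C) ->
  (forall P, is_derive Fr P (((m + RtoC 1) * Fr P + I) / RtoC om)%C) ->
  Fl (- W) = Fin (- W) -> Fr W = Fin W -> is_RInt Fin (- W) W I ->
  (exists K, forall P, Cmod (glue W Fl Fin Fr P) <= K * (1 + Rabs P)) ->
  reduced_solution m om W (glue W Fl Fin Fr) I.
Proof.
  intros Din Dl Dr El Er HI HK. split; [|split; [|split]].
  - apply continuous_glue; auto; intros P;
      [apply (is_derive_continuous_C _ _ _ (Dl P)) | apply (is_derive_continuous_C _ _ _ (Din P))
      | apply (is_derive_continuous_C _ _ _ (Dr P))].
  - exact HK.
  - apply (is_RInt_ext Fin); [|exact HI].
    intros x Hx. symmetry. apply glue_inside. revert Hx. unfold Rmin, Rmax.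
    destruct (Rle_dec (- W) W); lra.
  - intros P HPW HPmW. destruct (glue_locally W Fl Fin Fr W_pos P) as [Ll [Lin Lr]].
    destruct (Rtotal_order P (- W)) as [H1|[H1|H1]]; [| contradiction |];
      [| destruct (Rtotal_order P W) as [H2|[H2|H2]]; [| contradiction |]].
    + apply (is_derive_ext_loc _ _ _ _ (Ll H1)). eapply is_derive_C_eq; [apply Dl|].
      rewrite Psi_outside, glue_left by lra. field. exact om_neq0_C.
    + apply (is_derive_ext_loc _ _ _ _ (Lin (conj H1 H2))). eapply is_derive_C_eq; [apply Din|].
      rewrite Psi_inside, glue_inside by lra. field. exact om_neq0_C.
    + apply (is_derive_ext_loc _ _ _ _ (Lr H2)). eapply is_derive_C_eq; [apply Dr|].
      rewrite Psi_outside, glue_right by lra. field. exact om_neq0_C.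
Qed.

Section GrowthEnd.

(* [e] is the end of the stripe beyond which the outer mode [Cexp ((m + 1) / om * (P - e))]
   grows exponentially. *)
Variable e : R.
Hypotheses (e_end : e = W \/ e = - W) (e_growth : 0 < e * (Re m + 1) / om).

Lemma growth_m1_neq0 : (m + RtoC 1)%C <> RtoC 0.
Proof.
  intros E. rewrite <- Re_plus_1, E in e_growth. unfold Re, RtoC in e_growth; simpl in e_growth.
  unfold Rdiv in e_growth. rewrite Rmult_0_r, Rmult_0_l in e_growth. lra.
Qed.

Lemma Re_outer_rate : Re ((m + RtoC 1) / RtoC om) = (Re m + 1) / om.
Proof. rewrite Re_RtoC_div, Re_plus_1 by exact om_neq0. reflexivity. Qed.

Lemma reduced_value_at_growth_end Z I :
  reduced_solution m om W Z I -> Z e = (- I / (m + RtoC 1))%C.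
Proof.
  intros Hs. pose proof Hs as [_ [[K HK] _]].
  set (Y := (- I / (m + RtoC 1))%C).
  apply Cminus_eq0.
  apply (exp_mode_vanishes Y _ ((m + RtoC 1) / RtoC om * RtoC e) (K * (1 + W)) (K * W)).
  { rewrite Re_RtoC_mult, Re_outer_rate. replace ((Re m + 1) / om * e) with (e * (Re m + 1) / om)
      by (field; exact om_neq0). exact e_growth. }
  intros t Ht.
  replace (Y + Cexp ((m + RtoC 1) / RtoC om * RtoC e * RtoC t) * (Z e - Y))%C
    with (Z (e + e * t)).
  - eapply Rle_trans; [apply HK|]. apply Req_le.
    replace (Rabs (e + e * t)) with (W * (1 + t)); [ring|].
    destruct e_end as [-> | ->]; [rewrite Rabs_right by nra | rewrite Rabs_left by nra]; ring.
  - rewrite (reduced_outside _ _ Hs growth_m1_neq0 e (e + e * t)) by (destruct e_end; nra).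
    unfold exp_relax. replace (e + e * t - e) with (e * t) by ring.
    rewrite RtoC_mult, Cmult_assoc. reflexivity.
Qed.

Lemma reduced_representation Z I : m <> RtoC 0 ->
  reduced_solution m om W Z I -> forall P, Z P = (I * Phi m om W e P)%C.
Proof.
  intros Hm Hs. pose proof growth_m1_neq0 as Hm1.
  assert (Hin : forall P, - W <= P <= W -> Z P = (I * Phi_in m om e P)%C).
  { intros P HP.
    rewrite (reduced_inside _ _ Hs Hm e P), (reduced_value_at_growth_end _ _ Hs)
      by (destruct e_end; lra).
    unfold Phi_in, exp_relax. field. auto. }
  intros P. unfold Phi, glue.
  destruct (Rlt_dec P (- W)); [|destruct (Rle_dec P W)].
  - rewrite (reduced_outside _ _ Hs Hm1 (- W) P), Hin by lra.
    unfold exp_relax. field. auto.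
  - apply Hin. lra.
  - rewrite (reduced_outside _ _ Hs Hm1 W P), Hin by lra.
    unfold exp_relax. field. auto.
Qed.

Lemma is_RInt_Phi_in I : m <> RtoC 0 ->
  is_RInt (fun P => I * Phi_in m om e P)%C (- W) W
    (I - I * Dchar m om W e / (m * m * (m + RtoC 1)))%C.
Proof.
  intros Hm. pose proof growth_m1_neq0 as Hm1.
  assert (Hpt : forall P, exp_relax (m / RtoC om) (- I / m) e (- I / (m + RtoC 1)) P
                          = (I * Phi_in m om e P)%C).
  { intros P. unfold Phi_in, exp_relax. field. auto. }
  apply (is_RInt_ext _ _ _ _ _ (fun P _ => Hpt P)).
  replace (I - I * Dchar m om W e / (m * m * (m + RtoC 1)))%C
    with (- I / m * RtoC (W - - W) + (- I / (m + RtoC 1) - - I / m) / (m / RtoC om)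
          * (Cexp (m / RtoC om * RtoC (W - e)) - Cexp (m / RtoC om * RtoC (- W - e))))%C.
  - apply is_RInt_exp_relax, Cdiv_neq0; assumption.
  - unfold Dchar. replace (W - - W) with (2 * W) by ring. field. auto.
Qed.

Lemma reduced_char_eq Z I : m <> RtoC 0 ->
  reduced_solution m om W Z I -> (I * Dchar m om W e)%C = RtoC 0.
Proof.
  intros Hm Hs. pose proof growth_m1_neq0 as Hm1.
  assert (HI : is_RInt Z (- W) W (I - I * Dchar m om W e / (m * m * (m + RtoC 1)))%C).
  { apply (is_RInt_ext (fun P => I * Phi_in m om e P)%C); [|apply is_RInt_Phi_in, Hm].
    intros P HP. rewrite (reduced_representation _ _ Hm Hs P). unfold Phi.
    rewrite glue_inside; [reflexivity|]. revert HP. unfold Rmin, Rmax.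
    destruct (Rle_dec (- W) W); lra. }
  destruct Hs as [_ [_ [HI' _]]].
  pose proof (is_RInt_C_unique _ _ _ _ _ HI' HI) as E.
  transitivity (m * m * (m + RtoC 1) * (I - (I - I * Dchar m om W e / (m * m * (m + RtoC 1)))))%C.
  - field. auto.
  - rewrite <- E. ring.
Qed.

(* For [m = 0] the inner solution is affine, and integrating it gives
   [I (1 + 2 W + 2 W e / om) = 0] with [e / om > 0]. *)
Lemma reduced_m0_integral_eq0 Z I : m = RtoC 0 -> reduced_solution m om W Z I -> I = RtoC 0.
Proof.
  intros Hm Hs. pose proof Hs as [_ [_ [HI _]]].
  pose proof (reduced_value_at_growth_end _ _ Hs) as Ze.
  assert (Haff : is_RInt Z (- W) W
    (Z e * RtoC (W - - W) + I / RtoC om * RtoC (((W - e) ^ 2 - (- W - e) ^ 2) / 2))%C).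
  { apply (is_RInt_ext (fun P => Z e + I / RtoC om * RtoC (P - e))%C); [|apply is_RInt_affine].
    intros P HP. symmetry. apply (reduced_inside_m0 _ _ Hs Hm); [destruct e_end; lra|].
    revert HP. unfold Rmin, Rmax. destruct (Rle_dec (- W) W); lra. }
  pose proof (is_RInt_C_unique _ _ _ _ _ HI Haff) as E.
  assert (Hpos : 0 < 1 + 2 * W + 2 * W * (e / om)).
  { rewrite Hm in e_growth. unfold Re, RtoC in e_growth; simpl in e_growth.
    replace (e / om) with (e * (0 + 1) / om) by (field; exact om_neq0). nra. }
  apply (Cmult_eq0_l _ (RtoC (1 + 2 * W + 2 * W * (e / om)))); [apply RtoC_neq0; lra|].
  transitivity (I - (Z e * RtoC (W - - W)
                     + I / RtoC om * RtoC (((W - e) ^ 2 - (- W - e) ^ 2) / 2)))%C.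
  - rewrite Ze, Hm.
    replace (((W - e) ^ 2 - (- W - e) ^ 2) / 2) with (- (2 * W * e)) by field.
    replace (W - - W) with (2 * W) by ring.
    rewrite RtoC_opp, !RtoC_plus, !RtoC_mult, RtoC_div by exact om_neq0. field. auto.
  - rewrite <- E. ring.
Qed.

Lemma reduced_m0_zero Z I : m = RtoC 0 ->
  reduced_solution m om W Z I -> forall P, Z P = RtoC 0.
Proof.
  intros Hm Hs. pose proof growth_m1_neq0 as Hm1.
  pose proof (reduced_m0_integral_eq0 _ _ Hm Hs) as HI0.
  pose proof (reduced_value_at_growth_end _ _ Hs) as Ze. rewrite HI0 in Ze.
  assert (Hin : forall P, - W <= P <= W -> Z P = RtoC 0).
  { intros P HP. rewrite (reduced_inside_m0 _ _ Hs Hm e P), Ze, HI0 by (destruct e_end; lra).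
    field. auto. }
  intros P. destruct (Rlt_dec P (- W)); [|destruct (Rle_dec P W)].
  - rewrite (reduced_outside _ _ Hs Hm1 (- W) P), Hin, HI0 by lra.
    unfold exp_relax. field. auto.
  - apply Hin. lra.
  - rewrite (reduced_outside _ _ Hs Hm1 W P), Hin, HI0 by lra.
    unfold exp_relax. field. auto.
Qed.

Lemma outer_piece_bound p P : (p = W /\ W < P) \/ (p = - W /\ P < - W) ->
  Cmod (exp_relax ((m + RtoC 1) / RtoC om) (- / (m + RtoC 1)) p (Phi_in m om e p) P)
  <= Cmod (- / (m + RtoC 1)) + Cmod (Phi_in m om e p - - / (m + RtoC 1)).
Proof.
  intros Hp. pose proof (Cmod_ge_0 (Phi_in m om e p - - / (m + RtoC 1))).
  destruct (Req_dec p e) as [-> | Hpe].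
  - unfold Phi_in at 1. rewrite exp_relax_start, exp_relax_rest. lra.
  - eapply Rle_trans; [apply (Cmod_exp_relax_le _ _ _ _ _ 0) | rewrite exp_0; lra].
    rewrite Re_outer_rate.
    assert (Hsign : 0 < e * ((Re m + 1) / om))
      by (replace (e * ((Re m + 1) / om)) with (e * (Re m + 1) / om) by (field; exact om_neq0);
          exact e_growth).
    assert (Hside : e * (P - p) < 0) by (destruct e_end, Hp; nra).
    assert (e <> 0) by (destruct e_end; lra).
    nra.
Qed.

Lemma Phi_bounded : exists M, forall P, Cmod (Phi m om W e P) <= M.
Proof.
  set (Yi := (- / m)%C). set (Yo := (- / (m + RtoC 1))%C). set (cin := (m / RtoC om)%C).
  set (Bin := Cmod Yi + exp (Rabs (Re cin) * (2 * W)) * Cmod (Yo - Yi)).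
  set (Bl := Cmod Yo + Cmod (Phi_in m om e (- W) - Yo)).
  set (Br := Cmod Yo + Cmod (Phi_in m om e W - Yo)).
  assert (Bin_nonneg : 0 <= Bin).
  { unfold Bin. pose proof (Cmod_ge_0 Yi). pose proof (Cmod_ge_0 (Yo - Yi)).
    pose proof (exp_pos (Rabs (Re cin) * (2 * W))). nra. }
  assert (Bl_nonneg : 0 <= Bl).
  { unfold Bl. pose proof (Cmod_ge_0 Yo). pose proof (Cmod_ge_0 (Phi_in m om e (- W) - Yo)). lra. }
  assert (Br_nonneg : 0 <= Br).
  { unfold Br. pose proof (Cmod_ge_0 Yo). pose proof (Cmod_ge_0 (Phi_in m om e W - Yo)). lra. }
  exists (Bin + Bl + Br). intros P. unfold Phi, glue. fold Yo.
  destruct (Rlt_dec P (- W)); [|destruct (Rle_dec P W)].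
  - pose proof (outer_piece_bound (- W) P ltac:(right; lra)). fold Yo in H. unfold Bl. lra.
  - enough (Cmod (Phi_in m om e P) <= Bin) by lra.
    apply Cmod_exp_relax_le. fold cin.
    eapply Rle_trans; [apply Rle_abs|]. rewrite Rabs_mult.
    apply Rmult_le_compat_l; [apply Rabs_pos|]. apply Rabs_le. destruct e_end; lra.
  - pose proof (outer_piece_bound W P ltac:(left; lra)). fold Yo in H. unfold Br. lra.
Qed.

Lemma Phi_solution : m <> RtoC 0 -> Dchar m om W e = RtoC 0 ->
  reduced_solution m om W (Phi m om W e) (RtoC 1).
Proof.
  intros Hm HD. pose proof growth_m1_neq0 as Hm1.
  apply glue_reduced_solution.
  - intros P. eapply is_derive_C_eq; [apply is_derive_exp_relax|].
    unfold Phi_in. field. auto.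
  - intros P. eapply is_derive_C_eq; [apply is_derive_exp_relax|]. field. auto.
  - intros P. eapply is_derive_C_eq; [apply is_derive_exp_relax|]. field. auto.
  - apply exp_relax_start.
  - apply exp_relax_start.
  - assert (Hone : (RtoC 1 - RtoC 1 * Dchar m om W e / (m * m * (m + RtoC 1)))%C = RtoC 1)
      by (rewrite HD; field; auto).
    rewrite <- Hone.
    apply (is_RInt_ext (fun P => RtoC 1 * Phi_in m om e P)%C); [|apply is_RInt_Phi_in, Hm].
    intros P _. apply Cmult_1_l.
  - exact (linear_growth_of_bounded _ Phi_bounded).
Qed.

Lemma reduced_I_neq0 Z I : m <> RtoC 0 ->
  reduced_solution m om W Z I -> (exists P, Z P <> RtoC 0) -> I <> RtoC 0.
Proof.
  intros Hm Hs [P HP] ->. apply HP. rewrite (reduced_representation _ _ Hm Hs P). ring.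
Qed.

Lemma reduced_eigen_iff :
  (exists Z I, reduced_solution m om W Z I /\ exists P, Z P <> RtoC 0) <->
  m <> RtoC 0 /\ Dchar m om W e = RtoC 0.
Proof.
  split.
  - intros [Z [I [Hs [P HP]]]].
    assert (Hm : m <> RtoC 0) by (intros Hm; exact (HP (reduced_m0_zero _ _ Hm Hs P))).
    split; [exact Hm|].
    apply (Cmult_eq0_l _ I); [exact (reduced_I_neq0 _ _ Hm Hs (ex_intro _ P HP))|].
    rewrite Cmult_comm. exact (reduced_char_eq _ _ Hm Hs).
  - intros [Hm HD]. exists (Phi m om W e), (RtoC 1).
    pose proof (Phi_solution Hm HD) as Hs. split; [exact Hs|].
    apply (reduced_nontrivial _ _ Hs). apply RtoC_neq0. lra.
Qed.

Lemma reduced_proportional Z0 I0 Z I : m <> RtoC 0 ->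
  reduced_solution m om W Z0 I0 -> (exists P, Z0 P <> RtoC 0) ->
  reduced_solution m om W Z I -> exists c, forall P, Z P = (c * Z0 P)%C.
Proof.
  intros Hm Hs0 Hnz Hs. pose proof (reduced_I_neq0 _ _ Hm Hs0 Hnz) as HI0.
  exists (I / I0)%C. intros P.
  rewrite (reduced_representation _ _ Hm Hs P), (reduced_representation _ _ Hm Hs0 P).
  field. exact HI0.
Qed.

Lemma reduced_bounded Z I : m <> RtoC 0 ->
  reduced_solution m om W Z I -> exists M, forall P, Cmod (Z P) <= M.
Proof.
  intros Hm Hs. destruct Phi_bounded as [M HM]. exists (Cmod I * M). intros P.
  rewrite (reduced_representation _ _ Hm Hs P), Cmod_mult.
  apply Rmult_le_compat_l; [apply Cmod_ge_0 | apply HM].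
Qed.

End GrowthEnd.

Lemma reduced_extend_outside (Fin : R -> C) (J : C) : Re m = -1 ->
  (forall P, is_derive Fin P ((m * Fin P + J) / RtoC om)%C) -> is_RInt Fin (- W) W J ->
  (exists K, forall P, - W <= P <= W -> Cmod (Fin P) <= K) ->
  exists Fl Fr, reduced_solution m om W (glue W Fl Fin Fr) J.
Proof.
  intros HRe Din HI Bin.
  destruct (classic ((m + RtoC 1)%C = RtoC 0)) as [Hm1|Hm1].
  - set (k := (J / RtoC om)%C).
    exists (fun P => Fin (- W)%R + k * RtoC (P - - W)%R)%C,
           (fun P => Fin W + k * RtoC (P - W))%C.
    apply glue_reduced_solution; auto.
    + intros P. eapply is_derive_C_eq; [apply is_derive_affine|].
      rewrite Hm1. unfold k. field. auto.
    + intros P. eapply is_derive_C_eq; [apply is_derive_affine|].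
      rewrite Hm1. unfold k. field. auto.
    + rewrite Rminus_diag. ring.
    + rewrite Rminus_diag. ring.
    + apply glue_linear_growth; auto;
        [exists (Cmod (Fin (- W)) + Cmod k * (1 + Rabs (- W)))
        | exists (Cmod (Fin W) + Cmod k * (1 + Rabs W))];
        intros P _; apply Cmod_affine_le.
  - set (cout := ((m + RtoC 1) / RtoC om)%C). set (Yo := (- J / (m + RtoC 1))%C).
    assert (Hbound : forall p P,
               Cmod (exp_relax cout Yo p (Fin p) P) <= Cmod Yo + Cmod (Fin p - Yo)).
    { intros p P.
      eapply Rle_trans; [apply (Cmod_exp_relax_le _ _ _ _ _ 0) | rewrite exp_0; lra].
      unfold cout. rewrite Re_RtoC_div, Re_plus_1, HRe by exact om_neq0.
      replace ((-1 + 1) / om * (P - p)) with 0 by (field; exact om_neq0). lra. }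
    exists (exp_relax cout Yo (- W) (Fin (- W))), (exp_relax cout Yo W (Fin W)).
    apply glue_reduced_solution; auto.
    + intros P. eapply is_derive_C_eq; [apply is_derive_exp_relax|]. unfold cout, Yo. field. auto.
    + intros P. eapply is_derive_C_eq; [apply is_derive_exp_relax|]. unfold cout, Yo. field. auto.
    + apply exp_relax_start.
    + apply exp_relax_start.
    + destruct (linear_growth_of_bounded (exp_relax cout Yo (- W) (Fin (- W)))) as [Kl HKl];
        [eexists; intros P; apply Hbound|].
      destruct (linear_growth_of_bounded (exp_relax cout Yo W (Fin W))) as [Kr HKr];
        [eexists; intros P; apply Hbound|].
      apply glue_linear_growth; auto; [exists Kl | exists Kr]; intros P _; auto.
Qed.

(* On the line [Re m = -1] the outer modes neither grow nor decay, so no boundary condition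
   is imposed; the inner mode is normalised so that its integral is the value [J] it needs. *)
Lemma reduced_continuous_spectrum : Re m = -1 ->
  exists Z I, reduced_solution m om W Z I /\ exists P, Z P <> RtoC 0.
Proof.
  intros HRe.
  assert (Hm : m <> RtoC 0).
  { intros E. rewrite E in HRe. unfold Re, RtoC in HRe. simpl in HRe. lra. }
  set (c := (m / RtoC om)%C).
  assert (HRe_c : Re c = - / om).
  { unfold c. rewrite Re_RtoC_div, HRe by exact om_neq0. field. exact om_neq0. }
  assert (HRe_c0 : Re c <> 0).
  { rewrite HRe_c. apply Ropp_neq_0_compat, Rinv_neq_0_compat, om_neq0. }
  set (J := (RtoC om / m * (Cexp (c * RtoC (W - 0)) - Cexp (c * RtoC (- W - 0))))%C).
  assert (HJ : J <> RtoC 0).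
  { intros E. apply HRe_c0.
    assert (Hexp : Cexp (c * RtoC (W - 0)) = Cexp (c * RtoC (- W - 0))).
    { apply Cminus_eq0, (Cmult_eq0_l _ (RtoC om / m)); [apply Cdiv_neq0; assumption|].
      rewrite Cmult_comm. exact E. }
    apply (f_equal Cmod) in Hexp. rewrite !Cmod_Cexp, !Re_RtoC_mult in Hexp.
    apply exp_inv in Hexp. nra. }
  set (Fin := exp_relax c (- J / m) 0 (RtoC 1 + RtoC (2 * W) / m - J / m)).
  assert (Din : forall P, is_derive Fin P ((m * Fin P + J) / RtoC om)%C).
  { intros P. eapply is_derive_C_eq; [apply is_derive_exp_relax|].
    unfold Fin, c. field. split; assumption. }
  assert (HI : is_RInt Fin (- W) W J).
  { replace J with (- J / m * RtoC (W - - W)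
                    + (RtoC 1 + RtoC (2 * W) / m - J / m - - J / m) / c
                      * (Cexp (c * RtoC (W - 0)) - Cexp (c * RtoC (- W - 0))))%C.
    - unfold Fin. apply is_RInt_exp_relax. intros E. rewrite E in HRe_c0. apply HRe_c0. reflexivity.
    - unfold J, c. replace (W - - W) with (2 * W) by ring. field. split; assumption. }
  assert (Bin : exists K, forall P, - W <= P <= W -> Cmod (Fin P) <= K).
  { eexists. intros P HP. apply (Cmod_exp_relax_le _ _ _ _ _ (Rabs (Re c) * W)).
    eapply Rle_trans; [apply Rle_abs|]. rewrite Rabs_mult.
    apply Rmult_le_compat_l; [apply Rabs_pos|]. apply Rabs_le. lra. }
  destruct (reduced_extend_outside Fin J HRe Din HI Bin) as [Fl [Fr Hs]].
  exists (glue W Fl Fin Fr), J. split; [exact Hs|]. exact (reduced_nontrivial _ _ Hs HJ).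
Qed.

End ReducedProblem.

Definition mu (kappa tau : R) (lam : C) : C :=
  (RtoC kappa * RtoC tau * lam + RtoC kappa - RtoC 1)%C.

Lemma Re_mu kappa tau lam : Re (mu kappa tau lam) = kappa * (tau * Re lam + 1) - 1.
Proof. destruct lam; unfold mu, Re; simpl; ring. Qed.

Lemma mu_eq0_iff kappa tau lam : kappa <> 0 ->
  mu kappa tau lam = RtoC 0 <-> (RtoC tau * lam)%C = RtoC ((1 - kappa) / kappa).
Proof.
  intros Hk. pose proof (RtoC_neq0 _ Hk) as Hk'.
  unfold Rdiv. rewrite RtoC_mult, RtoC_minus, RtoC_inv by exact Hk. unfold mu. split; intros H.
  - apply Cminus_eq0, (Cmult_eq0_l _ (RtoC kappa)); [exact Hk'|].
    rewrite <- H. field. exact Hk'.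
  - transitivity (RtoC kappa * (RtoC tau * lam - (RtoC 1 - RtoC kappa) * / RtoC kappa))%C.
    + field. exact Hk'.
    + rewrite H. ring.
Qed.

(* The right-hand side is written as [(mu + 1 - p) z + I] to match [reduced_solution]. *)
Lemma eigen_equation_iff (k t O l p z d I : C) :
  k <> RtoC 0 -> t <> RtoC 0 -> O <> RtoC 0 ->
  (t * l * z = t * O * d - z + / k * p * z - / k * I)%C <->
  (d = ((k * t * l + k - RtoC 1 + RtoC 1 - p) * z + I) / (k * t * O))%C.
Proof.
  intros Hk Ht HO. split; intros H.
  - apply Cminus_eq0.
    transitivity ((t * O * d - z + / k * p * z - / k * I - t * l * z) / (t * O))%C.
    + field. auto.
    + rewrite <- H. field. auto.
  - rewrite H. field. auto.
Qed.

Lemma eig_solution_iff_reduced kappa tau Omega W lam Z :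
  kappa <> 0 -> tau <> 0 -> Omega <> 0 ->
  eig_solution kappa tau Omega W lam Z <->
  exists I, reduced_solution (mu kappa tau lam) (kappa * tau * Omega) W Z I.
Proof.
  intros Hk Ht HO.
  pose proof (RtoC_neq0 _ Hk) as Hk'. pose proof (RtoC_neq0 _ Ht) as Ht'.
  pose proof (RtoC_neq0 _ HO) as HO'.
  unfold eig_solution, reduced_solution, mu. split.
  - intros [Hc [Hg [I [HI Hd]]]]. exists I. split; [exact Hc|]. split; [exact Hg|].
    split; [exact HI|]. intros P H1 H2. destruct (Hd P H1 H2) as [dZ [HdZ E]].
    eapply is_derive_C_eq; [exact HdZ|].
    rewrite !RtoC_mult, RtoC_inv in E by exact Hk. rewrite !RtoC_mult.
    apply eigen_equation_iff; assumption.
  - intros [I [Hc [Hg [HI Hd]]]]. split; [exact Hc|]. split; [exact Hg|].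
    exists I. split; [exact HI|]. intros P H1 H2.
    eexists. split; [exact (Hd P H1 H2)|].
    rewrite !RtoC_mult, RtoC_inv by exact Hk.
    apply eigen_equation_iff; try assumption. reflexivity.
Qed.

Lemma is_eigenvalue_iff_reduced kappa tau Omega W lam :
  kappa <> 0 -> tau <> 0 -> Omega <> 0 ->
  is_eigenvalue kappa tau Omega W lam <->
  exists Z I, reduced_solution (mu kappa tau lam) (kappa * tau * Omega) W Z I /\
              exists P, Z P <> RtoC 0.
Proof.
  intros Hk Ht HO. unfold is_eigenvalue, eigenfunction. split.
  - intros [Z [HZ HP]]. apply (eig_solution_iff_reduced _ _ _ _ _ _ Hk Ht HO) in HZ.
    destruct HZ as [I HI]. exists Z, I. split; assumption.
  - intros [Z [I [HI HP]]]. exists Z. split; [|exact HP].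
    apply (eig_solution_iff_reduced _ _ _ _ _ _ Hk Ht HO). exists I. exact HI.
Qed.

Lemma growth_end_exists (W s Omega : R) : 0 < W -> s <> 0 -> Omega <> 0 ->
  exists e, (e = W \/ e = - W) /\ 0 < e * s * Omega.
Proof.
  intros HW Hs HO. assert (s * Omega <> 0) by (apply Rmult_integral_contrapositive; tauto).
  destruct (Rlt_dec 0 (s * Omega)); [exists W | exists (- W)]; split; auto; nra.
Qed.

Lemma growth_end_mu kappa tau Omega lam e : 0 < kappa -> 0 < tau -> Omega <> 0 ->
  0 < e * (tau * Re lam + 1) * Omega ->
  0 < e * (Re (mu kappa tau lam) + 1) / (kappa * tau * Omega).
Proof.
  intros Hk Ht HO H. rewrite Re_mu.
  replace (e * (kappa * (tau * Re lam + 1) - 1 + 1) / (kappa * tau * Omega))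
    with (e * (tau * Re lam + 1) * Omega / (tau * (Omega * Omega))) by (field; lra).
  apply Rdiv_lt_0_compat; [exact H|]. apply Rmult_lt_0_compat; [exact Ht|].
  pose proof (Rlt_0_sqr Omega HO). unfold Rsqr in *. lra.
Qed.

Section EigenvalueAtGrowthEnd.

Variables (kappa tau Omega W : R) (lam : C) (e : R).
Hypotheses (kappa_pos : 0 < kappa) (tau_pos : 0 < tau) (Omega_neq0 : Omega <> 0)
  (W_pos : 0 < W) (e_end : e = W \/ e = - W) (e_growth : 0 < e * (tau * Re lam + 1) * Omega).

Let kappa_neq0 : kappa <> 0. Proof. lra. Qed.
Let tau_neq0 : tau <> 0. Proof. lra. Qed.
Let om_neq0 : kappa * tau * Omega <> 0.
Proof. repeat apply Rmult_integral_contrapositive_currified; lra. Qed.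
Let mu_growth := growth_end_mu kappa tau Omega lam e kappa_pos tau_pos Omega_neq0 e_growth.

Lemma eigenvalue_iff_Dchar :
  is_eigenvalue kappa tau Omega W lam <->
  mu kappa tau lam <> RtoC 0 /\ Dchar (mu kappa tau lam) (kappa * tau * Omega) W e = RtoC 0.
Proof.
  rewrite (is_eigenvalue_iff_reduced _ _ _ _ _ kappa_neq0 tau_neq0 Omega_neq0).
  exact (reduced_eigen_iff _ _ _ W_pos om_neq0 e e_end mu_growth).
Qed.

Lemma eigenvalue_simple_bounded : is_eigenvalue kappa tau Omega W lam ->
  simple_eigenvalue kappa tau Omega W lam /\
  forall Z, eigenfunction kappa tau Omega W lam Z -> bounded_fun Z.
Proof.
  intros Hev. pose proof (proj1 (proj1 eigenvalue_iff_Dchar Hev)) as Hm.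
  pose proof (eig_solution_iff_reduced kappa tau Omega W lam) as Hlink.
  split.
  - destruct Hev as [Z0 [HZ0 HP0]]. exists Z0. split; [split; assumption|].
    intros Z HZ.
    apply Hlink in HZ0; auto. apply Hlink in HZ; auto.
    destruct HZ0 as [I0 HI0], HZ as [I HI].
    exact (reduced_proportional _ _ _ W_pos om_neq0 e e_end mu_growth _ _ _ _ Hm HI0 HP0 HI).
  - intros Z [HZ _]. apply Hlink in HZ; auto. destruct HZ as [I HI].
    exact (reduced_bounded _ _ _ W_pos om_neq0 e e_end mu_growth _ _ Hm HI).
Qed.

End EigenvalueAtGrowthEnd.

Lemma Dchar_at_W m om W :
  Dchar m om W W = (m * m * (m + RtoC 1) + RtoC (2 * W) * m * (m + RtoC 1)
                    - RtoC om * (RtoC 1 - Cexp (- (m / RtoC om * RtoC (2 * W)))))%C.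
Proof.
  unfold Dchar. rewrite Rminus_diag. replace (- W - W) with (- (2 * W)) by ring.
  rewrite RtoC_opp. replace (m / RtoC om * RtoC 0)%C with (RtoC 0) by ring.
  replace (m / RtoC om * - RtoC (2 * W))%C with (- (m / RtoC om * RtoC (2 * W)))%C by ring.
  rewrite Cexp_0. reflexivity.
Qed.

Lemma Dchar_at_neg_W m om W :
  Dchar m om W (- W) = (m * m * (m + RtoC 1) + RtoC (2 * W) * m * (m + RtoC 1)
                        - RtoC om * (Cexp (m / RtoC om * RtoC (2 * W)) - RtoC 1))%C.
Proof.
  unfold Dchar. replace (- W - - W) with 0 by ring. replace (W - - W) with (2 * W) by ring.
  replace (m / RtoC om * RtoC 0)%C with (RtoC 0) by ring. rewrite Cexp_0. reflexivity.
Qed.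

Lemma char_rhs_mu kappa tau Omega W lam : kappa <> 0 -> tau <> 0 -> Omega <> 0 ->
  (RtoC (kappa * tau * Rabs Omega) * char_rhs kappa tau Omega W lam)%C
  = (mu kappa tau lam * (mu kappa tau lam + RtoC 1) * (mu kappa tau lam + RtoC (2 * W)))%C.
Proof.
  intros Hk Ht HO. assert (Rabs Omega <> 0) by (apply Rabs_no_R0; exact HO).
  unfold char_rhs, mu. rewrite !RtoC_mult. field.
  repeat split; apply RtoC_neq0; assumption.
Qed.

Lemma mu_rate_width_pos kappa tau Omega W lam : kappa <> 0 -> tau <> 0 -> 0 < Omega ->
  (mu kappa tau lam / RtoC (kappa * tau * Omega) * RtoC (2 * W))%C
  = char_arg kappa tau Omega W lam.
Proof.
  intros Hk Ht HO. unfold char_arg, mu. rewrite Rabs_right by lra. rewrite !RtoC_mult.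
  field. repeat split; apply RtoC_neq0; lra.
Qed.

Lemma mu_rate_width_neg kappa tau Omega W lam : kappa <> 0 -> tau <> 0 -> Omega < 0 ->
  (- (mu kappa tau lam / RtoC (kappa * tau * Omega) * RtoC (2 * W)))%C
  = char_arg kappa tau Omega W lam.
Proof.
  intros Hk Ht HO. unfold char_arg, mu. rewrite Rabs_left by lra. rewrite !RtoC_mult, RtoC_opp.
  field. repeat split; apply RtoC_neq0; lra.
Qed.

Lemma Dchar_mu_eq0_iff_lower kappa tau Omega W lam e :
  kappa <> 0 -> tau <> 0 -> 0 < W -> (e = W \/ e = - W) -> e * Omega < 0 ->
  Dchar (mu kappa tau lam) (kappa * tau * Omega) W e = RtoC 0 <->
  (Cexp (char_arg kappa tau Omega W lam) - RtoC 1)%C = char_rhs kappa tau Omega W lam.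
Proof.
  intros Hk Ht HW He HeO. assert (HO : Omega <> 0) by (intros ->; lra).
  pose proof (char_rhs_mu kappa tau Omega W lam Hk Ht HO) as Hrhs.
  apply scaled_diff_eq0_iff with (c := RtoC (kappa * tau * Rabs Omega)).
  { apply RtoC_neq0. repeat apply Rmult_integral_contrapositive_currified; auto.
    apply Rabs_no_R0, HO. }
  transitivity (RtoC (kappa * tau * Rabs Omega) * char_rhs kappa tau Omega W lam
                - RtoC (kappa * tau * Rabs Omega)
                  * (Cexp (char_arg kappa tau Omega W lam) - RtoC 1))%C; [|ring].
  rewrite Hrhs. destruct He as [-> | ->].
  - rewrite Rabs_left by nra.
    rewrite Dchar_at_W, <- (mu_rate_width_neg kappa tau Omega W lam Hk Ht) by nra.
    rewrite !RtoC_mult, RtoC_opp. ring.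
  - rewrite Rabs_right by nra.
    rewrite Dchar_at_neg_W, <- (mu_rate_width_pos kappa tau Omega W lam Hk Ht) by nra.
    rewrite !RtoC_mult. ring.
Qed.

Lemma Dchar_mu_eq0_iff_upper kappa tau Omega W lam e :
  kappa <> 0 -> tau <> 0 -> 0 < W -> (e = W \/ e = - W) -> 0 < e * Omega ->
  Dchar (mu kappa tau lam) (kappa * tau * Omega) W e = RtoC 0 <->
  (RtoC 1 - Cexp (- char_arg kappa tau Omega W lam))%C = char_rhs kappa tau Omega W lam.
Proof.
  intros Hk Ht HW He HeO. assert (HO : Omega <> 0) by (intros ->; lra).
  pose proof (char_rhs_mu kappa tau Omega W lam Hk Ht HO) as Hrhs.
  apply scaled_diff_eq0_iff with (c := RtoC (kappa * tau * Rabs Omega)).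
  { apply RtoC_neq0. repeat apply Rmult_integral_contrapositive_currified; auto.
    apply Rabs_no_R0, HO. }
  transitivity (RtoC (kappa * tau * Rabs Omega) * char_rhs kappa tau Omega W lam
                - RtoC (kappa * tau * Rabs Omega)
                  * (RtoC 1 - Cexp (- char_arg kappa tau Omega W lam)))%C; [|ring].
  rewrite Hrhs. destruct He as [-> | ->].
  - rewrite Rabs_right by nra.
    rewrite Dchar_at_W, <- (mu_rate_width_pos kappa tau Omega W lam Hk Ht) by nra.
    rewrite !RtoC_mult. ring.
  - rewrite Rabs_left by nra.
    rewrite Dchar_at_neg_W, <- (mu_rate_width_neg kappa tau Omega W lam Hk Ht) by nra.
    replace (- - (mu kappa tau lam / RtoC (kappa * tau * Omega) * RtoC (2 * W)))%C
      with (mu kappa tau lam / RtoC (kappa * tau * Omega) * RtoC (2 * W))%C by ring.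
    rewrite !RtoC_mult, RtoC_opp. ring.
Qed.

Theorem theorem2p2 (kappa tau Omega W : R) :
  0 < kappa < 1 -> 0 < tau -> Omega <> 0 -> 0 < W ->
  (* (i) *)
  (forall lam : C, Re (RtoC tau * lam)%C < -1 ->
     (is_eigenvalue kappa tau Omega W lam <->
      (Cexp (char_arg kappa tau Omega W lam) - RtoC 1)%C
        = char_rhs kappa tau Omega W lam)) /\
  (* (ii) continuous spectrum *)
  (forall lam : C, Re (RtoC tau * lam)%C = -1 ->
     is_eigenvalue kappa tau Omega W lam) /\
  (* (iii) *)
  (forall lam : C, Re (RtoC tau * lam)%C > -1 ->
     (is_eigenvalue kappa tau Omega W lam <->
      ((RtoC 1 - Cexp (- char_arg kappa tau Omega W lam))%C
         = char_rhs kappa tau Omega W lam /\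
       (RtoC tau * lam)%C <> RtoC ((1 - kappa) / kappa)))) /\
  (* moreover: eigenvalues in (i),(iii) are simple with bounded eigenfunctions *)
  (forall lam : C, Re (RtoC tau * lam)%C <> -1 ->
     is_eigenvalue kappa tau Omega W lam ->
     simple_eigenvalue kappa tau Omega W lam /\
     forall Z, eigenfunction kappa tau Omega W lam Z -> bounded_fun Z).
Proof.
  intros [Hk0 Hk1] Ht HO HW.
  assert (Hk : kappa <> 0) by lra. assert (Ht0 : tau <> 0) by lra.
  split; [|split; [|split]]; intros lam Hl; rewrite Re_RtoC_mult_l in Hl.
  - destruct (growth_end_exists W (tau * Re lam + 1) Omega HW ltac:(lra) HO) as [e [He Hg]].
    rewrite (eigenvalue_iff_Dchar _ _ _ _ _ e Hk0 Ht HO HW He Hg).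
    rewrite (Dchar_mu_eq0_iff_lower _ _ _ _ _ e Hk Ht0 HW He) by (destruct He; nra).
    split; [intros [_ H]; exact H|]. intros H. split; [|exact H].
    intros Hm. assert (HRe : Re (mu kappa tau lam) = 0) by (rewrite Hm; reflexivity).
    rewrite Re_mu in HRe. nra.
  - apply is_eigenvalue_iff_reduced; [exact Hk | exact Ht0 | exact HO|].
    apply reduced_continuous_spectrum; [exact HW | |].
    + repeat apply Rmult_integral_contrapositive_currified; lra.
    + rewrite Re_mu. nra.
  - destruct (growth_end_exists W (tau * Re lam + 1) Omega HW ltac:(lra) HO) as [e [He Hg]].
    rewrite (eigenvalue_iff_Dchar _ _ _ _ _ e Hk0 Ht HO HW He Hg).
    rewrite (Dchar_mu_eq0_iff_upper _ _ _ _ _ e Hk Ht0 HW He) by (destruct He; nra).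
    rewrite <- (mu_eq0_iff _ _ _ Hk). tauto.
  - destruct (growth_end_exists W (tau * Re lam + 1) Omega HW ltac:(lra) HO) as [e [He Hg]].
    exact (eigenvalue_simple_bounded _ _ _ _ _ e Hk0 Ht HO HW He Hg).
Qed.
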